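(* Let $u$ be a fast decreasing distribution on $\mathbb R^D$ (so that it defines a linear functional on $\mathbb C[\boldsymbol x]$), let $\mathcal Q_2\in\mathbb C[\boldsymbol x]$ have complex zero set $Z(\mathcal Q_2)$ disjoint from $\operatorname{supp}u$, and let $\check u$ be a linear functional on $\mathbb C[\boldsymbol x]$ with $\mathcal Q_2\check u=u$. Assume $u$ and $\check u$ are quasi-definite, with quasi-tau matrices $H_{[l]}$ and $\check H_{[l]}$ respectively, and let $\check{\boldsymbol J}=(\check J_1,\dots,\check J_D)$ with $\check J_a=\check S\Lambda_a\check S^{-1}$. Then for every $k\ge1$ $$\det\big((\mathcal Q_2(\check{\boldsymbol J}))^{[k]}\big)=\prod_{l=0}^{k-1}\frac{\det H_{[l]}}{\det\check H_{[l]}},$$ and in particular $(\mathcal Q_2(\check{\boldsymbol J}))^{[k]}$ is nonsingular.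
   Context: $D\ge1$, $\boldsymbol x=(x_1,\dots,x_D)^\top$, $\mathbb C[\boldsymbol x]$ complex polynomials. For $k\in\mathbb Z_+$, $[k]=\{\boldsymbol\alpha\in\mathbb Z_+^D:|\boldsymbol\alpha|=k\}$, $|[k]|=\binom{D+k-1}{k}$. Multi-indices are ordered by graded lexicographic order; $\chi(\boldsymbol x)$ is the semi-infinite column vector of all monomials $\boldsymbol x^{\boldsymbol\alpha}$ in this order, with blocks $\chi_{[k]}=(\boldsymbol x^{\boldsymbol\alpha})_{\boldsymbol\alpha\in[k]}$. Semi-infinite matrices are partitioned accordingly into blocks $A_{[k],[l]}\in\mathbb C^{|[k]|\times|[l]|}$, and $A^{[k]}$ denotes the truncation to block rows and columns $0,\dots,k-1$. Spectral matrices: $(\Lambda_a)_{\boldsymbol\alpha,\boldsymbol\beta}=\delta_{\boldsymbol\alpha+\boldsymbol e_a,\boldsymbol\beta}$, $a=1,\dots,D$; for a polynomial $Q$, $Q(\boldsymbol\Lambda)=Q(\Lambda_1,\dots,\Lambda_D)$ and similarly $Q(\check{\boldsymbol J})$. For a linear functional $u$, $\langle Qu,P\rangle:=\langle u,QP\rangle$; its moment matrix is $G=\langle u,\chi\chi^\top\rangle$ (entrywise); $u$ is quasi-definite if $\det G^{[k]}\neq0$ for all $k\ge1$, and then $G=S^{-1}HS^{-\top}$ with $S$ block lower unitriangular and $H$ block diagonal with blocks $H_{[k]}$ (quasi-tau matrices). The same notation with a check refers to $\check u$. *)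

From HB Require Import structures.
From mathcomp Require Import all_boot all_order all_algebra.
From mathcomp Require Import reals.
From mathcomp Require Import complex.
From mathcomp Require Import mpoly.
Set Implicit Arguments. Unset Strict Implicit. Unset Printing Implicit Defensive.
Import Order.TTheory GRing.Theory Num.Theory.
Local Open Scope ring_scope.

Section SemiInfinite.
Variable (C : fieldType) (D : nat).

Notation mi := 'X_{1..D}.

Definition simx := mi -> mi -> C.

(* compositions: all lists of length n of naturals summing to l, in
   lexicographic order (decreasing first entry first: x1^l comes first) *)
Fixpoint comps (n l : nat) : seq (seq nat) :=
  match n with
  | 0 => if l == 0%N then [:: [::]] else [::]
  | n'.+1 => flatten [seq [seq i :: s | s <- comps n' (l - i)] | i <- rev (iota 0 l.+1)]
  end.

Definition mons (l : nat) : seq mi :=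
  [seq [multinom (nth 0%N s i) | i < D] | s <- comps D l].

(* all multi-indices of degree < k, in graded lexicographic order *)
Definition idx (k : nat) : seq mi := flatten [seq mons l | l <- iota 0 k].

Definition sqmx (s : seq mi) (A : simx) : 'M[C]_(size s) :=
  \matrix_(i < size s, j < size s) A (nth 0%MM s i) (nth 0%MM s j).

Definition trunc (k : nat) (A : simx) := sqmx (idx k) A.

Definition blk (l : nat) (A : simx) := sqmx (mons l) A.

(* Product of semi-infinite matrices A B, where the left factor A is known to
   satisfy A alpha beta = 0 whenever |beta| > |alpha| + c; the sum is then the
   (finite) full matrix product. *)
Definition bprod (c : nat) (A B : simx) : simx :=
  fun a g => \sum_(b <- idx (mdeg a + c).+1) A a b * B b g.

Definition simx1 : simx := fun a b => (a == b)%:R.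
Definition simxT (A : simx) : simx := fun a b => A b a.

Definition unitmi (a : 'I_D) : mi := [multinom ((i == a) : nat) | i < D].

Definition Lambda (a : 'I_D) : simx := fun al be => ((al + unitmi a)%MM == be)%:R.

Definition block_lower_unitri' (S : simx) :=
  (forall a b, (mdeg a < mdeg b)%N -> S a b = 0) /\
  (forall a b, mdeg a = mdeg b -> S a b = (a == b)%:R).
Definition block_diag (H : simx) := forall a b, mdeg a <> mdeg b -> H a b = 0.

Definition quasi_tau_fact (G S Sinv H : simx) :=
  [/\ block_lower_unitri' S /\ block_lower_unitri' Sinv,
      bprod 0 S Sinv = simx1 /\ bprod 0 Sinv S = simx1,
      block_diag H & G = bprod 0 (bprod 0 Sinv H) (simxT Sinv)].

Definition moment (u : {mpoly C[D]} -> C) : simx :=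
  fun a b => u ('X_[a] * 'X_[b]).

Definition quasi_definite (u : {mpoly C[D]} -> C) :=
  forall k, (1 <= k)%N -> \det (trunc k (moment u)) != 0.

Definition lin_functional (u : {mpoly C[D]} -> C) :=
  forall (c : C) (p q : {mpoly C[D]}), u (c *: p + q) = c * u p + u q.

(* monomial evaluated at commuting band-1 semi-infinite matrices J:
   J_0^{m_0} ( J_1^{m_1} ( ... I)) *)
Definition simx_mon (J : 'I_D -> simx) (m : mi) : simx :=
  foldr (fun a B => iter (m a) (bprod 1 (J a)) B) simx1 (enum 'I_D).

Definition simx_poly (Q : {mpoly C[D]}) (J : 'I_D -> simx) : simx :=
  fun a b => \sum_(m <- msupp Q) Q@_m * simx_mon J m a b.

Definition jacobi (S Sinv : simx) (a : 'I_D) : simx :=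
  bprod 1 (bprod 0 S (Lambda a)) Sinv.

End SemiInfinite.

From HB Require Import structures.
From mathcomp Require Import all_boot all_order all_algebra.
From mathcomp Require Import reals complex mpoly.
From mathcomp Require Import zify.
From mathcomp Require boolp.
Import GRing.Theory.
Local Open Scope ring_scope.
Set Implicit Arguments. Unset Strict Implicit. Unset Printing Implicit Defensive.

(* Write [Š] for the lower factor of [ǔ] (so [J_a = Š Λ_a Š^-1]) and
   [W = Q(Λ) Š^-1].  Then [Q(J) = Š W] with [Š] block unitriangular, so
   [det Q(J)^[k] = det W^[k]].  On the other hand [u = Q ǔ] gives
   [G = Q(Λ) Ǧ = W Ȟ Š^-T]; as [Ȟ] is block diagonal and [Š^-T] block upper
   triangular, truncation commutes with this product, hence
   [det G^[k] = det W^[k] * det Ȟ^[k]].  Finally [det G^[k] = det H^[k]] and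
   [det Ǧ^[k] = det Ȟ^[k]] are nonzero by quasi-definiteness, and the
   determinant of a truncated block diagonal matrix is the product of the
   determinants of its blocks. *)

Lemma mem_comps n l s : (s \in comps n l) = (size s == n) && (sumn s == l).
Proof.
elim: n l s => [|n IH] l s /=; first by case: s => [|x s]; case: l.
have mem_range i : (i \in rev (iota 0 l.+1)) = (i <= l)%N.
  by rewrite mem_rev mem_iota.
apply/flatten_mapP/idP.
  case=> i; rewrite mem_range => il /mapP [t].
  by rewrite IH => /andP[/eqP st /eqP sut] -> /=; rewrite st sut subnKC // !eqxx.
case: s => [|i t] //= /andP[st /eqP sut].
exists i; first by rewrite mem_range -sut leq_addr.
rewrite eqSS in st.
by apply/mapP; exists t; rewrite // IH -sut addKn st eqxx.
Qed.

Lemma uniq_comps n l : uniq (comps n l).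
Proof.
elim: n l => [|n IH] l /=; first by case: l.
apply: allpairs_uniq_dep => //.
  by rewrite rev_uniq -[0%N :: _]/(iota 0 l.+1) iota_uniq.
by move=> [x1 y1] [x2 y2] _ _ /= [-> ->].
Qed.

Section Indices.
Variable D : nat.
Local Notation mi := 'X_{1..D}.

Lemma big_nth_sumn (s : seq nat) : size s = D ->
  (\sum_(i < D) nth 0%N s i)%N = sumn s.
Proof. by move=> sz; rewrite sumnE (big_nth 0%N) sz big_mkord. Qed.

Lemma mem_mons l (m : mi) : (m \in mons D l) = (mdeg m == l).
Proof.
apply/mapP/eqP.
  case=> s; rewrite mem_comps => /andP[/eqP sz /eqP su] ->.
  by rewrite mdegE; under eq_bigr do rewrite mnmE; rewrite big_nth_sumn.
move=> dm; exists (val (val m)).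
  rewrite mem_comps size_tuple eqxx -dm mdegE -big_nth_sumn ?size_tuple //.
  by apply/eqP; apply: eq_bigr => i _; rewrite mnm_tnth (tnth_nth 0%N).
by apply/mnmP => i; rewrite mnmE mnm_tnth (tnth_nth 0%N).
Qed.

Lemma uniq_mons l : uniq (mons D l).
Proof.
rewrite map_inj_in_uniq ?uniq_comps // => s t.
rewrite !mem_comps => /andP[/eqP ss _] /andP[/eqP st _] E.
apply: (@eq_from_nth _ 0%N) => [|i]; first by rewrite ss st.
rewrite ss => iD.
by have := congr1 (fun m : mi => m (Ordinal iD)) E; rewrite !mnmE.
Qed.

Lemma idxS k : idx D k.+1 = idx D k ++ mons D k.
Proof. by rewrite /idx -addn1 iotaD map_cat flatten_cat /= cats0. Qed.

Lemma mem_idx k (m : mi) : (m \in idx D k) = (mdeg m < k)%N.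
Proof.
elim: k => [|k IH]; first by rewrite ltn0 /idx /= in_nil.
by rewrite idxS mem_cat IH mem_mons ltnS orbC -leq_eqVlt.
Qed.

Lemma uniq_idx k : uniq (idx D k).
Proof.
elim: k => [|k IH] //; rewrite idxS cat_uniq IH uniq_mons /= andbT.
by apply/hasPn => m; rewrite mem_mons mem_idx => /eqP ->; rewrite ltnn.
Qed.

Lemma big_idx_widen (V : nmodType) n m (F : mi -> V) : (n <= m)%N ->
  (forall b, (n <= mdeg b)%N -> (mdeg b < m)%N -> F b = 0) ->
  \sum_(b <- idx D n) F b = \sum_(b <- idx D m) F b.
Proof.
elim: m => [|m IH]; first by rewrite leqn0 => /eqP ->.
rewrite leq_eqVlt => /orP[/eqP -> //|]; rewrite ltnS => nm F0.
rewrite idxS big_cat /= -IH // => [|b nb bm]; last exact: F0 (ltnW _).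
rewrite [X in _ = _ + X]big1_seq ?addr0 // => b /andP[_].
by rewrite mem_mons => /eqP db; apply: F0; rewrite db.
Qed.

Lemma big_idx_delta (V : pzSemiRingType) K (b0 : mi) (F : mi -> V) :
  (mdeg b0 < K)%N -> \sum_(b <- idx D K) (b0 == b)%:R * F b = F b0.
Proof.
move=> b0K; rewrite (bigD1_seq b0) ?uniq_idx ?mem_idx //= eqxx mul1r.
by rewrite big1 ?addr0 // => b; rewrite eq_sym => /negbTE ->; rewrite mul0r.
Qed.

Lemma mdeg_nth_idx_mono k i j : (i <= j)%N -> (j < size (idx D k))%N ->
  (mdeg (nth 0%MM (idx D k) i) <= mdeg (nth 0%MM (idx D k) j))%N.
Proof.
move=> ij; elim: k => [|k IH] //; rewrite idxS size_cat => jlt.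
have mdeg_mons s : (s < size (mons D k))%N -> mdeg (nth 0%MM (mons D k) s) = k.
  by move=> ?; apply/eqP; rewrite -mem_mons mem_nth.
rewrite !nth_cat; case: ltnP => ik; case: ltnP => jk.
- exact: IH.
- rewrite mdeg_mons ?ltn_subLR //; apply: ltnW; rewrite -mem_idx; exact: mem_nth.
- by have := leq_ltn_trans (leq_trans ik ij) jk; rewrite ltnn.
- by rewrite !mdeg_mons ?ltn_subLR // (leq_ltn_trans ij).
Qed.

Lemma mdeg_unitmi (i : 'I_D) : mdeg (unitmi i) = 1%N.
Proof.
rewrite mdegE (bigD1 i) //= mnmE eqxx big1 // => j /negbTE ji.
by rewrite mnmE ji.
Qed.

End Indices.

Section SemiInfiniteMatrices.
Variables (C : fieldType) (D : nat).
Local Notation mi := 'X_{1..D}.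
Local Notation simx := (simx C D).

Definition block_band (c : nat) (A : simx) :=
  forall a b : mi, (mdeg a + c < mdeg b)%N -> A a b = 0.

(* [shiftmx n B = Λ^n B], hence [shiftmx_poly Q B = Q(Λ) B]. *)
Definition shiftmx (n : mi) (B : simx) : simx := fun b g => B (b + n)%MM g.

Definition shiftmx_poly (Q : {mpoly C[D]}) (B : simx) : simx :=
  fun b g => \sum_(m <- msupp Q) Q@_m * shiftmx m B b g.

Lemma block_band_unitri (S : simx) : block_lower_unitri' S -> block_band 0 S.
Proof. by move=> [S0 _] a b; rewrite addn0; apply: S0. Qed.

Lemma block_band_diag (H : simx) : block_diag H -> block_band 0 H.
Proof. by move=> Hd a b ab; apply: Hd; move: ab; lia. Qed.

Lemma block_band_Lambda i : block_band 1 (Lambda C i).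
Proof.
move=> a b ab; rewrite /Lambda; case: eqP => // E.
by move: ab; rewrite -E mdegD mdeg_unitmi ltnn.
Qed.

Lemma bprod_idx K c (A B : simx) a g : block_band c A -> (mdeg a + c < K)%N ->
  bprod c A B a g = \sum_(b <- idx D K) A a b * B b g.
Proof.
move=> Ab aK; apply: big_idx_widen => // b ab _.
by rewrite Ab ?mul0r.
Qed.

Lemma block_band_bprod c1 c2 (A B : simx) :
  block_band c2 B -> block_band (c1 + c2) (bprod c1 A B).
Proof.
move=> Bb a e ae; rewrite /bprod big1_seq // => b /andP[_].
by rewrite mem_idx => ba; rewrite Bb ?mulr0 //; lia.
Qed.

Lemma bprodA c1 c2 (A B Z : simx) : block_band c1 A -> block_band c2 B ->
  bprod c1 A (bprod c2 B Z) = bprod (c1 + c2) (bprod c1 A B) Z.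
Proof.
move=> Ab Bb; apply: boolp.funext => a; apply: boolp.funext => g.
set K := (mdeg a + (c1 + c2)).+1.
rewrite (bprod_idx (K := K)) //; last by rewrite /K; lia.
rewrite [RHS](bprod_idx (K := K)); [|exact: block_band_bprod|by rewrite /K; lia].
transitivity (\sum_(b <- idx D K) \sum_(e <- idx D K) A a b * (B b e * Z e g)).
  apply: eq_bigr => b _; rewrite -big_distrr /=.
  case: (leqP (mdeg b) (mdeg a + c1)) => ab; last by rewrite Ab ?mul0r.
  by rewrite (bprod_idx (K := K)) //; rewrite /K; lia.
rewrite exchange_big /=; apply: eq_bigr => e _.
rewrite (bprod_idx (K := K) _ _ Ab) ?big_distrl /=; last by rewrite /K; lia.
by apply: eq_bigr => b _; rewrite mulrA.
Qed.

Lemma bprod1l c (Z : simx) : bprod c (@simx1 C D) Z = Z.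
Proof.
apply: boolp.funext => a; apply: boolp.funext => g.
by rewrite /bprod big_idx_delta //; lia.
Qed.

Lemma bprod_Lambda i (Z : simx) : bprod 1 (Lambda C i) Z = shiftmx (unitmi i) Z.
Proof.
apply: boolp.funext => a; apply: boolp.funext => g.
by rewrite /bprod big_idx_delta // mdegD mdeg_unitmi; lia.
Qed.

Lemma shiftmx0 (B : simx) : shiftmx 0%MM B = B.
Proof.
by apply: boolp.funext => b; apply: boolp.funext => g; rewrite /shiftmx addm0.
Qed.

Lemma shiftmxD m n (B : simx) : shiftmx m (shiftmx n B) = shiftmx (m + n)%MM B.
Proof.
by apply: boolp.funext => b; apply: boolp.funext => g; rewrite /shiftmx addmA.
Qed.

Lemma iter_shiftmx n k (B : simx) : iter k (shiftmx n) B = shiftmx (n *+ k)%MM B.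
Proof.
elim: k => [|k IH]; first by rewrite shiftmx0.
by rewrite iterS IH shiftmxD mulmS.
Qed.

Lemma foldr_iter_shiftmx (m : mi) (B : simx) :
  foldr (fun a X => iter (m a) (shiftmx (unitmi a)) X) B (enum 'I_D) = shiftmx m B.
Proof.
have -> r : foldr (fun a X => iter (m a) (shiftmx (unitmi a)) X) B r =
    shiftmx (\big[+%MM/0%MM]_(a <- r) (unitmi a *+ m a))%MM B.
  elim: r => [|a r IH] /=; first by rewrite big_nil shiftmx0.
  by rewrite IH iter_shiftmx shiftmxD big_cons.
suff -> : \big[+%MM/0%MM]_(a <- enum 'I_D) (unitmi a *+ m a)%MM = m by [].
apply/mnmP => j; rewrite mnm_sumE big_enum /= (bigD1 j) //=.
rewrite mulmnE mnmE eqxx mul1n big1 ?addn0 // => a aj.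
by rewrite mulmnE mnmE eq_sym (negbTE aj).
Qed.

Lemma sqmx_mul (s : seq mi) (A B : simx) :
  sqmx s A *m sqmx s B = sqmx s (fun a g => \sum_(b <- s) A a b * B b g).
Proof.
apply/matrixP => i j; rewrite !mxE (big_nth 0%MM) big_mkord.
by apply: eq_bigr => l _; rewrite !mxE.
Qed.

Lemma trunc_simxT k (A : simx) : trunc k (simxT A) = (trunc k A)^T.
Proof. by apply/matrixP => i j; rewrite !mxE. Qed.

Lemma trunc_bprod k (A B : simx) : block_band 0 A ->
  trunc k (bprod 0 A B) = trunc k A *m trunc k B.
Proof.
move=> Ab; rewrite /trunc sqmx_mul; apply/matrixP => i j; rewrite !mxE.
by apply: bprod_idx; rewrite // addn0 -mem_idx mem_nth.
Qed.

Lemma det_trunc_unitri k (S : simx) : block_lower_unitri' S -> \det (trunc k S) = 1.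
Proof.
move=> [S0 S1]; rewrite det_trig.
  by rewrite big1 // => i _; rewrite mxE S1 // eqxx.
apply/is_trig_mxP => i j ij; rewrite mxE.
have := mdeg_nth_idx_mono (ltnW ij) (ltn_ord j).
rewrite leq_eqVlt => /orP[/eqP E|]; last exact: S0.
by rewrite S1 // nth_uniq ?uniq_idx // ltn_eqF.
Qed.

Lemma det_castmx n m (e : n = m) (M : 'M[C]_n) : \det (castmx (e, e) M) = \det M.
Proof. by case: m / e; rewrite castmx_id. Qed.

Lemma det_sqmx_cat (s1 s2 : seq mi) (A : simx) :
  (forall a b, a \in s1 -> b \in s2 -> A a b = 0 /\ A b a = 0) ->
  \det (sqmx (s1 ++ s2) A) = \det (sqmx s1 A) * \det (sqmx s2 A).
Proof.
move=> A0; have E := size_cat s1 s2.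
have -> : sqmx (s1 ++ s2) A =
   castmx (esym E, esym E) (block_mx (sqmx s1 A) 0 0 (sqmx s2 A)).
  apply/matrixP => i j; rewrite castmxE !mxE.
  case: (fintype.splitP (cast_ord _ i)) => i1 /= ei; rewrite !mxE;
  case: (fintype.splitP (cast_ord _ j)) => j1 /= ej;
    rewrite ?mxE !nth_cat ei ej ?ltn_ord // ?ltnNge ?leq_addr /= ?addKn //.
  - by case: (A0 _ _ (mem_nth 0%MM (ltn_ord i1)) (mem_nth 0%MM (ltn_ord j1))).
  - by case: (A0 _ _ (mem_nth 0%MM (ltn_ord j1)) (mem_nth 0%MM (ltn_ord i1))).
by rewrite det_castmx det_ublock.
Qed.

Lemma det_trunc_block_diag k (H : simx) : block_diag H ->
  \det (trunc k H) = \prod_(l < k) \det (blk l H).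
Proof.
move=> Hd; elim: k => [|k IH]; first by rewrite big_ord0 det_mx00.
rewrite big_ord_recr /= -IH /trunc /blk idxS det_sqmx_cat // => a b.
rewrite mem_idx mem_mons => ak /eqP bk.
by split; apply: Hd; rewrite bk => E; move: ak; rewrite E ltnn.
Qed.

Lemma det_trunc_quasi_tau k (G S Sinv H : simx) :
  quasi_tau_fact G S Sinv H -> \det (trunc k G) = \det (trunc k H).
Proof.
move=> [[_ Sinv_unitri] _ Hd ->]; have Sinvb := block_band_unitri Sinv_unitri.
have SinvHb : block_band 0 (bprod 0 Sinv H).
  exact: (block_band_bprod (c1 := 0) _ (block_band_diag Hd)).
rewrite !trunc_bprod // trunc_simxT !det_mulmx det_tr (det_trunc_unitri k Sinv_unitri).
by rewrite mul1r mulr1.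
Qed.

End SemiInfiniteMatrices.

Section Jacobi.
Variables (C : fieldType) (D : nat).
Local Notation mi := 'X_{1..D}.
Local Notation simx := (simx C D).
Variables (Sc Sci : simx).
Hypotheses (Sc_unitri : block_lower_unitri' Sc) (Sci_unitri : block_lower_unitri' Sci).
Hypotheses (Sc_Sci : bprod 0 Sc Sci = @simx1 C D) (Sci_Sc : bprod 0 Sci Sc = @simx1 C D).

Let Scb := block_band_unitri Sc_unitri.
Let Scib := block_band_unitri Sci_unitri.

Lemma bprod_jacobi i (Z : simx) :
  bprod 1 (jacobi Sc Sci i) (bprod 0 Sc Z) = bprod 0 Sc (shiftmx (unitmi i) Z).
Proof.
have ScLb : block_band 1 (bprod 0 Sc (Lambda C i)).
  exact (block_band_bprod (c1 := 0) _ (block_band_Lambda C i)).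
have cancel_Z : bprod 0 Sci (bprod 0 Sc Z) = Z by rewrite bprodA // Sci_Sc bprod1l.
rewrite /jacobi.
transitivity (bprod 1 (bprod 0 Sc (Lambda C i)) (bprod 0 Sci (bprod 0 Sc Z))).
  by rewrite [RHS]bprodA // addn0.
have := @bprodA C D 0 1 Sc (Lambda C i) Z Scb (block_band_Lambda C i).
by rewrite cancel_Z add0n bprod_Lambda => <-.
Qed.

Lemma simx_mon_jacobi (m : mi) :
  simx_mon (jacobi Sc Sci) m = bprod 0 Sc (shiftmx m Sci).
Proof.
rewrite /simx_mon -Sc_Sci -foldr_iter_shiftmx.
elim: (enum 'I_D) => [|a r /= ->] //.
by elim: (m a) => [|n /= ->]; rewrite ?bprod_jacobi.
Qed.

Lemma simx_poly_jacobi (Q : {mpoly C[D]}) :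
  simx_poly Q (jacobi Sc Sci) = bprod 0 Sc (shiftmx_poly Q Sci).
Proof.
apply: boolp.funext => a; apply: boolp.funext => g.
rewrite /simx_poly; under eq_bigr do rewrite simx_mon_jacobi /bprod big_distrr.
rewrite exchange_big /=; apply: eq_bigr => b _.
by rewrite /shiftmx_poly big_distrr; apply: eq_bigr => m _; rewrite mulrCA.
Qed.

Lemma det_trunc_poly_jacobi k (Q : {mpoly C[D]}) :
  \det (trunc k (simx_poly Q (jacobi Sc Sci))) = \det (trunc k (shiftmx_poly Q Sci)).
Proof.
by rewrite simx_poly_jacobi trunc_bprod // det_mulmx (det_trunc_unitri k Sc_unitri) mul1r.
Qed.

End Jacobi.

Section Moments.
Variables (C : fieldType) (D : nat).
Local Notation mi := 'X_{1..D}.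
Local Notation simx := (simx C D).

Lemma lin_functional0 (u : {mpoly C[D]} -> C) : lin_functional u -> u 0 = 0.
Proof.
by move=> hu; have := hu (-1) 0 0; rewrite scaler0 addr0 mulN1r addNr.
Qed.

Lemma lin_functional_sum (u : {mpoly C[D]} -> C) (I : Type) (r : seq I)
    (c : I -> C) (p : I -> {mpoly C[D]}) :
  lin_functional u -> u (\sum_(m <- r) c m *: p m) = \sum_(m <- r) c m * u (p m).
Proof.
move=> hu; elim: r => [|m r IH]; first by rewrite !big_nil lin_functional0.
by rewrite !big_cons hu IH.
Qed.

Lemma moment_mul_poly (u uc : {mpoly C[D]} -> C) (Q : {mpoly C[D]}) a g :
  lin_functional uc -> (forall p, uc (Q * p) = u p) ->
  moment u a g = \sum_(m <- msupp Q) Q@_m * moment uc (a + m)%MM g.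
Proof.
move=> huc hQ; rewrite /moment -hQ {1}(mpolyE Q) mulr_suml.
under eq_bigr do rewrite -scalerAl.
rewrite lin_functional_sum //; apply: eq_bigr => m _.
by rewrite mpolyXD mulrCA mulrA.
Qed.

Variables (Sci Hc : simx).
Hypotheses (Scib : block_band 0 Sci) (Hc_diag : block_diag Hc).

(* In a column of degree [< k] only indices of degree [< k] contribute, since
   [Hc] is block diagonal and [Sci^T] is block upper triangular. *)
Lemma quasi_tau_entry_trunc k x g : (mdeg g < k)%N ->
  bprod 0 (bprod 0 Sci Hc) (simxT Sci) x g =
  \sum_(b <- idx D k) (\sum_(e <- idx D k) Sci x e * Hc e b) * Sci g b.
Proof.
move=> gk; set K := (mdeg x + k).+1.
have SciHcb : block_band 0 (bprod 0 Sci Hc).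
  exact: (block_band_bprod (c1 := 0) _ (block_band_diag Hc_diag)).
rewrite (bprod_idx (K := K) _ _ SciHcb) /simxT; last by rewrite /K; lia.
under eq_bigr do rewrite (bprod_idx (K := K)) ?addn0 ?ltnS ?leq_addr //.
transitivity (\sum_(b <- idx D K)
                (\sum_(e <- idx D k) Sci x e * Hc e b) * Sci g b).
  apply: eq_bigr => b _; case: (ltnP (mdeg b) k) => bk; last first.
    by rewrite Scib ?mulr0 //; lia.
  congr (_ * _); symmetry; apply: big_idx_widen => [|e ke _]; first by rewrite /K; lia.
  by rewrite Hc_diag ?mulr0 //; lia.
symmetry; apply: big_idx_widen => [|b kb _]; first by rewrite /K; lia.
by rewrite Scib ?mulr0 //; lia.
Qed.

Lemma trunc_moment_factor k (u uc : {mpoly C[D]} -> C) (Q : {mpoly C[D]}) :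
  lin_functional uc -> (forall p, uc (Q * p) = u p) ->
  moment uc = bprod 0 (bprod 0 Sci Hc) (simxT Sci) ->
  trunc k (moment u) = trunc k (shiftmx_poly Q Sci) *m trunc k Hc *m (trunc k Sci)^T.
Proof.
move=> huc hQ Gc; rewrite -trunc_simxT /trunc !sqmx_mul.
apply/matrixP => i j; rewrite !mxE.
set a := nth 0%MM (idx D k) i; set g := nth 0%MM (idx D k) j.
have gk : (mdeg g < k)%N by rewrite -mem_idx mem_nth.
rewrite (moment_mul_poly _ _ huc hQ) Gc.
under eq_bigr do rewrite (quasi_tau_entry_trunc _ gk) big_distrr.
rewrite exchange_big /=; apply: eq_bigr => b _.
under eq_bigr do rewrite mulrA.
rewrite /simxT -big_distrl /=; congr (_ * _).
under eq_bigr do rewrite big_distrr.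
rewrite exchange_big /=; apply: eq_bigr => e _.
by rewrite /shiftmx_poly big_distrl; apply: eq_bigr => m _; rewrite mulrA.
Qed.

End Moments.

Unset Implicit Arguments.

Theorem mainTheorem1 (R : realType) (D : nat) (hD : (1 <= D)%N)
    (u uc : {mpoly R[i][D]} -> R[i]) (Q2 : {mpoly R[i][D]})
    (hu : lin_functional u) (huc : lin_functional uc)
    (hQ : forall p : {mpoly R[i][D]}, uc (Q2 * p) = u p)
    (qd_u : quasi_definite u) (qd_uc : quasi_definite uc)
    (S Sinv H Sc Scinv Hc : simx R[i] D)
    (hS : quasi_tau_fact (moment u) S Sinv H)
    (hSc : quasi_tau_fact (moment uc) Sc Scinv Hc) :
  forall k : nat, (1 <= k)%N ->
    \det (trunc k (simx_poly Q2 (jacobi Sc Scinv)))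
      = \prod_(l < k) (\det (blk l H) / \det (blk l Hc))
    /\ \det (trunc k (simx_poly Q2 (jacobi Sc Scinv))) != 0.
Proof.
move=> k k1.
have [_ _ H_diag _] := hS.
have [[Sc_unitri Scinv_unitri] [Sc_Scinv Scinv_Sc] Hc_diag Gc] := hSc.
have detH := det_trunc_quasi_tau k hS.
have detHc := det_trunc_quasi_tau k hSc.
have H_neq0 : \det (trunc k H) != 0 by rewrite -detH qd_u.
have Hc_neq0 : \det (trunc k Hc) != 0 by rewrite -detHc qd_uc.
have detW : \det (trunc k H) = \det (trunc k (shiftmx_poly Q2 Scinv)) * \det (trunc k Hc).
  have Scinvb := block_band_unitri Scinv_unitri.
  rewrite -detH (trunc_moment_factor Scinvb Hc_diag k huc hQ Gc).
  by rewrite !det_mulmx det_tr (det_trunc_unitri k Scinv_unitri) mulr1.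
have -> : \det (trunc k (simx_poly Q2 (jacobi Sc Scinv)))
           = \det (trunc k H) / \det (trunc k Hc).
  by rewrite det_trunc_poly_jacobi // detW mulfK.
rewrite prodf_div -!det_trunc_block_diag //.
by split; rewrite // mulf_neq0 ?invr_eq0.
Qed.
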